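(* Let $R$ be a ring and $(A_{i,r})$ a double complex of $R$-modules with all columns exact, and form its total complex with respect to $\Sigma=\prod$ (so $A_n=\prod_i A_{i,n-i}$). Then for each $n$ there is a short exact sequence $$0\to\operatorname{PB}(H^{\mathrm{tot}}(A_n))\to H^{\mathrm{tot}}(A_n)\to\varprojlim_{i\to\infty}(A_{i,n-i})_\square\to 0,$$ where the inverse limit is over the system with maps $(A_{i+1,n-i-1})_\square\to(A_{i,n-i})_\square$ given by $\bar\delta_1^{-1}\circ\bar\delta_2$, with $\bar\delta_2:(A_{i+1,n-i-1})_\square\to{}^\square A_{i+1,n-i}$ the extramural map of the horizontal arrow $A_{i+1,n-i-1}\to A_{i+1,n-i}$ and $\bar\delta_1:(A_{i,n-i})_\square\to{}^\square A_{i+1,n-i}$ the extramural map of the vertical arrow $A_{i,n-i}\to A_{i+1,n-i}$ (an isomorphism). This inverse limit is also isomorphic to the inverse limit of the corresponding system of receptors ${}^\square A_{i,n-i+1}$, and to $\ker(\bar\delta:A_{n\square}\to{}^\square A_{n+1})$; and $\operatorname{PB}(H^{\mathrm{tot}}(A_n))$ equals the image of the intramural map ${}^\square A_n\to H^{\mathrm{tot}}(A_n)$, isomorphic to $\operatorname{coker}(\bar\delta:A_{n-1\,\square}\to{}^\square A_n)$.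
   Context: A double complex of $R$-modules is a family $A_{i,r}$ $(i,r\in\mathbb{Z})$ ($i$ = row index increasing downward, $r$ = column index increasing rightward) with vertical maps $\delta_1:A_{i,r}\to A_{i+1,r}$ and horizontal maps $\delta_2:A_{i,r}\to A_{i,r+1}$, $\delta_1\delta_1=0$, $\delta_2\delta_2=0$, $\delta_1\delta_2=\delta_2\delta_1$. For an object $A$, with $d,e$ the horizontal maps into/out of $A$, $c,f$ the vertical maps into/out of $A$, $p$ the composite of two arrows ending at $A$, $q$ the composite of two arrows starting at $A$: receptor ${}^\square A=(\ker e\cap\ker f)/\operatorname{im}p$, donor $A_\square=\ker q/(\operatorname{im}c+\operatorname{im}d)$; an arrow $A\to B$ induces the ''extramural'' map $A_\square\to{}^\square B$. Total complex: $A_n=\prod_i A_{i,n-i}$, $\delta=\delta_2+(-1)^n\delta_1:A_n\to A_{n+1}$ (computed componentwise), $H^{\mathrm{tot}}(A_n)=\ker\delta/\operatorname{im}\delta$. $A_{n\square}=\prod_i(A_{i,n-i})_\square$, ${}^\square A_n=\prod_i{}^\square A_{i,n-i}$; $\bar\delta_1,\bar\delta_2:A_{n\square}\to{}^\square A_{n+1}$ are the products of the extramural maps of vertical, respectively horizontal, arrows; $\bar\delta=\bar\delta_2+(-1)^n\bar\delta_1$; the intramural map ${}^\square A_n\to H^{\mathrm{tot}}(A_n)$ is induced by the identity of $A_n$. An element $x\in H^{\mathrm{tot}}(A_n)$ is a ''peekaboo element'' if for every finite set $I\subseteq\mathbb{Z}$, $x$ is represented by a cycle $(x_i)\in A_n$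 with $x_i=0$ for all $i\in I$; these form a submodule $\operatorname{PB}(H^{\mathrm{tot}}(A_n))$. *)

From HB Require Import structures.
From mathcomp Require Import all_boot all_order all_algebra.
Set Implicit Arguments. Unset Strict Implicit. Unset Printing Implicit Defensive.
Import Order.TTheory GRing.Theory Num.Theory.
Local Open Scope ring_scope.

(* A double complex of R-modules: A i r, i = row (downward), r = column
   (rightward); dv : A i r -> A (i+1) r (delta_1), dh : A i r -> A i (r+1)
   (delta_2). *)
Record dcomplex (R : pzRingType) := DComplex {
  dobj : int -> int -> lmodType R;
  dv : forall i r, {linear dobj i r -> dobj (i + 1) r};
  dh : forall i r, {linear dobj i r -> dobj i (r + 1)};
  dvv : forall i r (x : dobj i r), dv (i + 1) r (dv i r x) = 0;
  dhh : forall i r (x : dobj i r), dh i (r + 1) (dh i r x) = 0;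
  dvh : forall i r (x : dobj i r), dv i (r + 1) (dh i r x) = dh (i + 1) r (dv i r x)
}.
Arguments dobj {R} d.
Arguments dv {R} d i r.
Arguments dh {R} d i r.

Section DoubleComplex.
Variable R : pzRingType.
Variable D : dcomplex R.
Local Notation A := (dobj D).
Local Notation dv := (dv D).
Local Notation dh := (dh D).

Definition columns_exact : Prop :=
  forall i r (x : A (i + 1) r), dv (i + 1) r x = 0 -> exists y : A i r, dv i r y = x.

Definition sgn (n : int) : R := (-1) ^+ `|n|%N.

(* Ambient type: families indexed by all positions (i,r).  An element of the
   product  prod_i A_{i,m-i}  (degree m) is represented by such a family, only
   its values on the diagonal  i + r = m  being relevant. *)
Definition chain := forall i r, A i r.
Definition cadd (x y : chain) : chain := fun i r => x i r + y i r.
Definition copp (x : chain) : chain := fun i r => - x i r.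
Definition csub (x y : chain) : chain := cadd x (copp y).
Definition cscale (a : R) (x : chain) : chain := fun i r => a *: x i r.

(* Receptor  ^[]A = (ker e /\ ker f) / im p  at position (i,r) (cycles), and
   im p at position (i+1,r+1) (p : A i r -> A (i+1) (r+1) the diagonal). *)
Definition recK i r (x : A i r) : Prop := dh i r x = 0 /\ dv i r x = 0.
Definition recI i r (x : A (i + 1) (r + 1)) : Prop :=
  exists y : A i r, dh (i + 1) r (dv i r y) = x.
Arguments recI : clear implicits.
(* Donor  A_[] = ker q / (im c + im d) : ker q at (i,r), im c + im d at (i+1,r+1). *)
Definition donK i r (x : A i r) : Prop := dh (i + 1) r (dv i r x) = 0.
Definition donI i r (x : A (i + 1) (r + 1)) : Prop :=
  exists (y : A i (r + 1)) (z : A (i + 1) r), x = dv i (r + 1) y + dh (i + 1) r z.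
Arguments donI : clear implicits.

Definition prodRecK (m : int) (w : chain) := forall i r, i + r = m -> recK (w i r).
Definition prodRecI (m : int) (w : chain) :=
  forall i r, (i + 1) + (r + 1) = m -> recI i r (w (i + 1) (r + 1)).
Definition prodDonK (m : int) (w : chain) := forall i r, i + r = m -> donK (w i r).
Definition prodDonI (m : int) (w : chain) :=
  forall i r, (i + 1) + (r + 1) = m -> donI i r (w (i + 1) (r + 1)).

(* The differential delta = delta_2 + (-1)^m delta_1 of degree m, component at
   position (i+1,r+1) (with (i+1)+r = m).  The same formula on representatives
   gives the map  bar-delta : A_{m[]} -> ^[]A_{m+1}. *)
Definition tdiff m (u : chain) i r : A (i + 1) (r + 1) :=
  dh (i + 1) r (u (i + 1) r) + sgn m *: dv i (r + 1) (u i (r + 1)).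
Arguments tdiff : clear implicits.

(* Total cycles and boundaries in degree n;  H^tot(A_n) = totZ n / totB n. *)
Definition totZ n (x : chain) : Prop :=
  forall i r, (i + 1) + r = n -> tdiff n x i r = 0.
Definition totB n (x : chain) : Prop :=
  exists y : chain, forall i r, (i + 1) + (r + 1) = n ->
    x (i + 1) (r + 1) = tdiff (n - 1) y i r.

Definition peekaboo n (x : chain) : Prop :=
  totZ n x /\
  forall I : seq int, exists x' : chain,
    [/\ totZ n x', totB n (csub x' x) &
        forall i r, i + r = n -> i \in I -> x' i r = 0].

(* inverse limit over i of (A_{i,n-i})_[] along bar-delta_1^{-1} o bar-delta_2:
   compatible families  bar-delta_2 [u_{i+1}] = bar-delta_1 [u_i]. *)
Definition limK n (u : chain) : Prop :=
  prodDonK n u /\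
  forall i r, (i + 1) + r = n ->
    recI i r (dh (i + 1) r (u (i + 1) r) - dv i (r + 1) (u i (r + 1))).
Definition limI n (u : chain) := prodDonI n u.

(* inverse limit over i of ^[]A_{i,n-i+1} along bar-delta_2 o bar-delta_1^{-1}. *)
Definition limRK n (w : chain) : Prop :=
  prodRecK (n + 1) w /\
  forall i r, (i + 1) + (r + 1) = n ->
    exists v : A (i + 1) (r + 1),
      [/\ donK v,
          recI (i + 1) r (w (i + 1 + 1) (r + 1) - dv (i + 1) (r + 1) v) &
          recI i (r + 1) (w (i + 1) (r + 1 + 1) - dh (i + 1) (r + 1) v)].
Definition limRI n (w : chain) := prodRecI (n + 1) w.

(* ker (bar-delta : A_{n[]} -> ^[]A_{n+1}) *)
Definition kerK n (u : chain) : Prop :=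
  prodDonK n u /\ forall i r, (i + 1) + r = n -> recI i r (tdiff n u i r).
Definition kerI n (u : chain) := prodDonI n u.

(* coker (bar-delta : A_{n-1 []} -> ^[]A_n) *)
Definition cokK n (w : chain) := prodRecK n w.
Definition cokI n (w : chain) : Prop :=
  exists u : chain, prodDonK (n - 1) u /\
    forall i r, (i + 1) + (r + 1) = n ->
      recI i r (w (i + 1) (r + 1) - tdiff (n - 1) u i r).

(* Module homomorphisms / isomorphisms between subquotients K1/I1 -> K2/I2
   of the ambient module, given on representatives. *)
Definition sq_hom (K1 I1 K2 I2 : chain -> Prop) (f : chain -> chain) : Prop :=
  [/\ forall x, K1 x -> K2 (f x),
      forall x y, K1 x -> K1 y -> I2 (csub (f (cadd x y)) (cadd (f x) (f y))),
      forall a x, K1 x -> I2 (csub (f (cscale a x)) (cscale a (f x))) &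
      forall x, K1 x -> I1 x -> I2 (f x)].
Definition sq_surj (K1 K2 I2 : chain -> Prop) (f : chain -> chain) : Prop :=
  forall y, K2 y -> exists x, K1 x /\ I2 (csub (f x) y).
Definition sq_iso (K1 I1 K2 I2 : chain -> Prop) (f : chain -> chain) : Prop :=
  [/\ sq_hom K1 I1 K2 I2 f,
      forall x, K1 x -> I2 (f x) -> I1 x &
      sq_surj K1 K2 I2 f].

End DoubleComplex.

Arguments recI {R D} i r x.
Arguments donI {R D} i r x.
Arguments tdiff {R D} m u i r.
Arguments totZ {R} D _ _.
Arguments totB {R} D _ _.
Arguments peekaboo {R} D _ _.
Arguments limK {R} D _ _.
Arguments limI {R} D _ _.
Arguments limRK {R} D _ _.
Arguments limRI {R} D _ _.
Arguments kerK {R} D _ _.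
Arguments kerI {R} D _ _.
Arguments cokK {R} D _ _.
Arguments cokI {R} D _ _.
Arguments prodRecK {R} D _ _.
Arguments prodRecI {R} D _ _.
Arguments prodDonK {R} D _ _.
Arguments prodDonI {R} D _ _.

From Pilot Require Import Defs.
From HB Require Import structures.
From mathcomp Require Import all_boot all_order all_algebra zify.
From Stdlib Require Import ClassicalEpsilon FunctionalExtensionality.
Import GRing.Theory.
Local Open Scope ring_scope.
Set Implicit Arguments. Unset Strict Implicit. Unset Printing Implicit Defensive.

(* Modules are handled through representatives: families
   [chain D] with an element at every position, the subquotients of Defs
   being given by predicates on such families.  The heart is
   the description of peekaboo cycles: their components lie in im c + im d,
   and such a cycle is homologous to a family of receptor cycles
   ([donI_intramural]); conversely, with exact columns, finitely many
   boundary corrections make any finite set of components of a family of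
   receptor cycles vanish ([kill_step], [kill_iter]). *)

Lemma odd_succ (m : int) : odd (absz (m + 1)) = ~~ odd (absz m).
Proof.
case: m => k; first by rewrite -PoszD absz_nat addn1.
have -> : Negz k + 1 = - k%:Z by rewrite NegzE -addn1 PoszD opprD addrK.
by rewrite abszN absz_nat NegzE abszN absz_nat /= negbK.
Qed.

(* Every integer is a successor; used to bring indices into the shape
   (i + 1, r + 1) demanded by the dependent types of the differentials. *)
Lemma ex_pred (i : int) : exists j, i = j + 1.
Proof. by exists (i - 1); rewrite subrK. Qed.

Lemma choice_on (T : int -> int -> Type) (d : forall i r, T i r)
    (C : int -> int -> Prop) (P : forall i r, T i r -> Prop) :
  (forall i r, C i r -> exists y, P i r y) ->
  exists f : forall i r, T i r, forall i r, C i r -> P i r (f i r).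
Proof.
move=> ex; exists (fun i r => match excluded_middle_informative (C i r) with
  | left c => proj1_sig (constructive_indefinite_description _ (ex i r c))
  | right _ => d i r end).
move=> i r c; case: excluded_middle_informative => [c'|//].
exact: proj2_sig (constructive_indefinite_description _ (ex i r c')).
Qed.

Lemma subrBB (V : zmodType) (a b c : V) : (c - b) - (c - a) = a - b.
Proof. by rewrite opprB addrC addrA subrK. Qed.

Section DoubleComplex.
Variable R : pzRingType.
Variable D : dcomplex R.
Local Notation A := (dobj D).
Local Notation dV := (dv D).
Local Notation dH := (dh D).
Local Notation chain := (chain D).

Lemma sgnE (m : int) : sgn R m = if odd (absz m) then -1 else 1.
Proof. by rewrite /sgn -signr_odd; case: odd; rewrite ?expr0 ?expr1. Qed.

Lemma sgn_pred (m : int) : sgn R (m - 1) = - sgn R m.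
Proof.
by rewrite !sgnE -[in RHS](subrK 1 m) odd_succ; case: odd; rewrite ?opprK.
Qed.

Lemma sgnK (V : lmodType R) (m : int) (v : V) : sgn R m *: (sgn R m *: v) = v.
Proof. by rewrite scalerA sgnE; case: odd; rewrite ?mulrNN mulr1 scale1r. Qed.

(* The differentials as linear maps, stated so that the composites stay
   recognisable by the complex identities [dvv], [dhh], [dvh]. *)
Lemma dHZ i r (a : R) (v : A i r) : dH i r (a *: v) = a *: dH i r v.
Proof. exact: linearZ_LR. Qed.
Lemma dVZ i r (a : R) (v : A i r) : dV i r (a *: v) = a *: dV i r v.
Proof. exact: linearZ_LR. Qed.
Lemma dHD i r (u v : A i r) : dH i r (u + v) = dH i r u + dH i r v.
Proof. exact: raddfD. Qed.
Lemma dVD i r (u v : A i r) : dV i r (u + v) = dV i r u + dV i r v.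
Proof. exact: raddfD. Qed.
Lemma dHN i r (u : A i r) : dH i r (- u) = - dH i r u.
Proof. exact: raddfN. Qed.
Lemma dVN i r (u : A i r) : dV i r (- u) = - dV i r u.
Proof. exact: raddfN. Qed.
Lemma dHB i r (u v : A i r) : dH i r (u - v) = dH i r u - dH i r v.
Proof. exact: raddfB. Qed.
Lemma dVB i r (u v : A i r) : dV i r (u - v) = dV i r u - dV i r v.
Proof. exact: raddfB. Qed.
Lemma dH0 i r : dH i r 0 = 0.
Proof. exact: raddf0. Qed.
Lemma dV0 i r : dV i r 0 = 0.
Proof. exact: raddf0. Qed.
Definition diffE := (dHZ, dVZ, dHD, dVD, dHN, dVN, dH0, dV0).

Lemma recI0 i r : recI (D:=D) i r 0.
Proof. by exists 0; rewrite !diffE. Qed.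
Lemma recID i r x y : recI (D:=D) i r x -> recI i r y -> recI i r (x + y).
Proof. by move=> [a <-] [b <-]; exists (a + b); rewrite !diffE. Qed.
Lemma recIN i r x : recI (D:=D) i r x -> recI i r (- x).
Proof. by move=> [a <-]; exists (- a); rewrite !diffE. Qed.
Lemma recIB i r x y : recI (D:=D) i r x -> recI i r y -> recI i r (x - y).
Proof. by move=> hx /recIN; apply: recID. Qed.

Lemma donI0 i r : donI (D:=D) i r 0.
Proof. by exists 0, 0; rewrite !diffE addr0. Qed.
Lemma donIN i r x : donI (D:=D) i r x -> donI i r (- x).
Proof. by move=> [a [b ->]]; exists (- a), (- b); rewrite !diffE opprD. Qed.

Lemma donKN i r (x : A i r) : donK x -> donK (- x).
Proof. by rewrite /donK !diffE => ->; rewrite oppr0. Qed.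

(* The differentials carry im c + im d into im p: this is how donors map
   to receptors (the extramural maps). *)
Lemma dH_donI i r (x : A (i + 1) (r + 1)) :
  donI i r x -> recI i (r + 1) (dH (i + 1) (r + 1) x).
Proof. by move=> [y [z ->]]; exists y; rewrite dHD dhh addr0. Qed.
Lemma dV_donI i r (x : A (i + 1) (r + 1)) :
  donI i r x -> recI (i + 1) r (dV (i + 1) (r + 1) x).
Proof. by move=> [y [z ->]]; exists z; rewrite dVD dvv add0r dvh. Qed.

Definition cnull (x : chain) : Prop := forall i r, x i r = 0.

Lemma csub_null (x y : chain) : (forall i r, x i r = y i r) -> cnull (csub x y).
Proof. by move=> e i r; rewrite /csub /cadd /copp e subrr. Qed.

Lemma prodDonI_null m x : cnull x -> prodDonI D m x.
Proof. by move=> h i r _; rewrite h; apply: donI0. Qed.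
Lemma prodRecI_null m x : cnull x -> prodRecI D m x.
Proof. by move=> h i r _; rewrite h; apply: recI0. Qed.

Lemma sq_hom_pointwise (K1 I1 K2 I2 : chain -> Prop) (f : chain -> chain) :
  (forall x, cnull x -> I2 x) ->
  (forall x y i r, f (cadd x y) i r = f x i r + f y i r) ->
  (forall a x i r, f (cscale a x) i r = a *: f x i r) ->
  (forall x, K1 x -> K2 (f x)) -> (forall x, K1 x -> I1 x -> I2 (f x)) ->
  sq_hom K1 I1 K2 I2 f.
Proof.
move=> hnull hD hZ hK hI; split => // [x y _ _|a x _]; apply/hnull/csub_null.
  by move=> i r; rewrite hD.
by move=> i r; rewrite hZ.
Qed.

Definition castA i i' r r' (ei : i = i') (er : r = r') (x : A i r) : A i' r' :=
  eq_rect r (fun r => A i' r) (eq_rect i (fun i => A i r) x i' ei) r' er.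

Definition shift2 (G : forall i r, A (i + 1) (r + 1)) : chain :=
  fun i r => castA (subrK 1 i) (subrK 1 r) (G (i - 1) (r - 1)).

Lemma shift2E G i r : shift2 G (i + 1) (r + 1) = G i r.
Proof.
rewrite /shift2; move: (subrK 1 (i + 1)) (subrK 1 (r + 1)).
rewrite (addrK 1 i) (addrK 1 r) => e1 e2.
by rewrite (eq_irrelevance e1 erefl) (eq_irrelevance e2 erefl).
Qed.

Definition single i0 r0 (a : A i0 r0) : chain := fun i r =>
  match i0 =P i with
  | ReflectT ei => match r0 =P r with ReflectT er => castA ei er a | ReflectF _ => 0 end
  | ReflectF _ => 0 end.

Lemma single_id i0 r0 (a : A i0 r0) : single a i0 r0 = a.
Proof.
rewrite /single; case: eqP => [ei|//]; case: eqP => [er|//].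
by rewrite (eq_irrelevance ei erefl) (eq_irrelevance er erefl).
Qed.

Lemma single_neq i0 r0 (a : A i0 r0) i r : i <> i0 -> single a i r = 0.
Proof. by move=> ne; rewrite /single; case: eqP => // e; case: ne. Qed.

Definition bnd m (Y : chain) : chain := shift2 (fun i r => tdiff m Y i r).

Lemma bndE m Y i r : bnd m Y (i + 1) (r + 1) = tdiff m Y i r.
Proof. exact: shift2E. Qed.

Lemma totB_bnd n Y : totB D n (bnd (n - 1) Y).
Proof. by exists Y => i r _; rewrite bndE. Qed.
Lemma totB_ext n x x' : totB D n x -> (forall i r, x' i r = x i r) -> totB D n x'.
Proof. by move=> [Y hY] e; exists Y => i r h; rewrite e hY. Qed.
Lemma totB_add n x y : totB D n x -> totB D n y -> totB D n (cadd x y).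
Proof.
move=> [Y hY] [Z hZ]; exists (cadd Y Z) => i r h.
by rewrite /cadd hY // hZ // /tdiff !diffE scalerDr addrACA.
Qed.
Lemma totB_opp n x : totB D n x -> totB D n (copp x).
Proof.
move=> [Y hY]; exists (copp Y) => i r h.
by rewrite /copp hY // /tdiff !diffE scalerN opprD.
Qed.
Lemma totB_null n x : cnull x -> totB D n x.
Proof. by move=> h; exists (fun _ _ => 0) => i r _; rewrite h /tdiff !diffE scaler0 addr0. Qed.

Lemma totB_trans n x y z :
  totB D n (csub x y) -> totB D n (csub y z) -> totB D n (csub x z).
Proof.
move=> hxy hyz; apply: totB_ext (totB_add hxy hyz) _ => i r.
by rewrite /csub /cadd /copp addrA subrK.
Qed.

Lemma totB_sym n x y : totB D n (csub x y) -> totB D n (csub y x).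
Proof.
by move=> /totB_opp h; apply: totB_ext h _ => i r; rewrite /csub /cadd /copp opprB.
Qed.

Lemma totZ_add n x y : totZ D n x -> totZ D n y -> totZ D n (cadd x y).
Proof.
move=> hx hy i r h; move: (hx i r h) (hy i r h).
by rewrite /tdiff /cadd !diffE scalerDr addrACA => -> ->; rewrite addr0.
Qed.
Lemma totZ_opp n x : totZ D n x -> totZ D n (copp x).
Proof.
move=> hx i r h; move: (hx i r h).
by rewrite /tdiff /copp !diffE scalerN -opprD => ->; rewrite oppr0.
Qed.

Lemma totZ_bnd n Y : totZ D n (bnd (n - 1) Y).
Proof.
move=> i r h; have [r0 ->] := ex_pred r; have [i0 ->] := ex_pred i.
rewrite /tdiff !bndE /tdiff !diffE dhh dvv dvh sgn_pred.
by rewrite scaler0 add0r addr0 scaleNr addNr.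
Qed.

Lemma cycleE n x i r : totZ D n x -> (i + 1) + r = n ->
  dH (i + 1) r (x (i + 1) r) = - (sgn R n *: dV i (r + 1) (x i (r + 1))).
Proof. by move=> hz h; apply/eqP; rewrite -addr_eq0; apply/eqP; apply: hz. Qed.

Lemma cycle_donK n x i r : totZ D n x -> i + r = n -> donK (x i r).
Proof.
move=> hz h; have [r0 Er] := ex_pred r; subst r.
have h' : (i + 1) + r0 = n by lia.
have e : dV i (r0 + 1) (x i (r0 + 1)) = - (sgn R n *: dH (i + 1) r0 (x (i + 1) r0)).
  by rewrite (cycleE hz h') scalerN sgnK opprK.
by rewrite /donK e !diffE dhh scaler0 oppr0.
Qed.

(* It turns
   the total differential delta_2 + (-1)^n delta_1 of degree n into the
   difference delta_2 - delta_1, up to a sign depending on the position. *)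
Definition tw (n : int) (x : chain) : chain := fun i r =>
  if ~~ odd (absz n) && odd (absz i) then - x i r else x i r.

Lemma twK n x : tw n (tw n x) = x.
Proof.
apply: functional_extensionality_dep => i; apply: functional_extensionality_dep => r.
by rewrite /tw; case: ifP => h; rewrite h ?opprK.
Qed.

Lemma tw_add n x y i r : tw n (cadd x y) i r = tw n x i r + tw n y i r.
Proof. by rewrite /tw /cadd; case: ifP => _ //; rewrite opprD. Qed.

Lemma tw_scale n a x i r : tw n (cscale a x) i r = a *: tw n x i r.
Proof. by rewrite /tw /cscale; case: ifP => _ //; rewrite scalerN. Qed.

Lemma tw_closed n (P : forall i r, A i r -> Prop)
    (HP : forall i r y, P i r y -> P i r (- y)) x i r :
  P i r (tw n x i r) <-> P i r (x i r).
Proof.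
rewrite /tw; case: ifP => // _; split => h; last exact: HP.
by rewrite -(opprK (x i r)); apply: HP.
Qed.

Lemma tw_diff n x i r :
  dH (i + 1) r (tw n x (i + 1) r) - dV i (r + 1) (tw n x i (r + 1)) = tdiff n x i r \/
  dH (i + 1) r (tw n x (i + 1) r) - dV i (r + 1) (tw n x i (r + 1)) = - tdiff n x i r.
Proof.
rewrite /tw /tdiff sgnE odd_succ; case: (odd (absz n)); case: (odd (absz i)) => /=;
  rewrite ?diffE ?scaleN1r ?scale1r ?opprK ?opprD; by [left | right].
Qed.

Lemma tw_diff_closed n x i r (P : A (i + 1) (r + 1) -> Prop) :
  (forall y, P y -> P (- y)) ->
  P (dH (i + 1) r (tw n x (i + 1) r) - dV i (r + 1) (tw n x i (r + 1)))
  <-> P (tdiff n x i r).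
Proof.
move=> hP; case: (tw_diff n x i r) => -> //.
by split => [/hP|/hP //]; rewrite opprK.
Qed.

Lemma limK_tw n u : limK D n (tw n u) <-> kerK D n u.
Proof.
have hdon i r := tw_closed n (P := fun i r (y : A i r) => donK y) (@donKN) u i r.
have hrec i r := tw_diff_closed n u (P := recI i r) (@recIN i r).
split=> -[hd hl]; split=> i r h.
- by apply/hdon/hd.
- by apply/hrec/hl.
- by apply/hdon/hd.
- by apply/hrec/hl.
Qed.

Lemma prodDonI_tw n m x : prodDonI D n (tw m x) <-> prodDonI D n x.
Proof.
split=> h i r e; have := h i r e; rewrite /tw; case: ifP => // _.
  by move/donIN; rewrite opprK.
exact: donIN.
Qed.

Lemma cycle_kerK n x : totZ D n x -> kerK D n x.
Proof.
move=> hz; split=> [i r h|i r h]; first exact: cycle_donK hz h.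
by rewrite (hz i r h); apply: recI0.
Qed.

(* Conversely every compatible family of donors lifts to a (twisted)
   total cycle: correct each component by delta_2 of a witness of the
   compatibility condition. *)
Lemma limK_lift n u : limK D n u ->
  exists x, totZ D n x /\ prodDonI D n (csub (tw n x) u).
Proof.
move=> [hd hl].
have [y hy] := @choice_on A (fun _ _ => 0) _ (fun i r z =>
  dH (i + 1) r (dV i r z) = dH (i + 1) r (u (i + 1) r) - dV i (r + 1) (u i (r + 1))) hl.
pose v := shift2 (fun i r => u (i + 1) (r + 1) + dH (i + 1) r (y (i + 1) r)).
exists (tw n v); split.
  move=> i r h; apply/(tw_diff_closed n (tw n v) (P := fun z => z = 0)).
    by move=> z ->; rewrite oppr0.
  have [r0 Er] := ex_pred r; have [i0 Ei] := ex_pred i; subst i r.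
  rewrite !twK /v !shift2E !diffE dhh addr0 dvh (hy (i0 + 1) (r0 + 1) h).
  by rewrite addrCA subrr addr0 subrr.
move=> i r _; rewrite twK /csub /cadd /copp /v shift2E addrAC subrr add0r.
by exists 0, (y (i + 1) r); rewrite dV0 add0r.
Qed.

Lemma tdiff_donI m Y i r : donI (D:=D) i r (tdiff m Y i r).
Proof.
by exists (sgn R m *: Y i (r + 1)), (Y (i + 1) r); rewrite dVZ /tdiff; apply: addrC.
Qed.

Lemma totB_donI n x : totB D n x -> prodDonI D n x.
Proof. by move=> [Y hY] i r h; rewrite hY //; apply: tdiff_donI. Qed.

(* A peekaboo element is represented, at every position, by a boundary
   component; hence all its components lie in im c + im d. *)
Lemma peekaboo_donI n x : peekaboo D n x -> prodDonI D n x.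
Proof.
move=> [hz hp] i r h.
have [x' [hz' [Y hY] hv]] := hp [:: i + 1].
have e : x (i + 1) (r + 1) = - tdiff (n - 1) Y i r.
  move: (hY i r h); rewrite /csub /cadd /copp hv //; last by rewrite mem_seq1.
  by rewrite add0r => <-; rewrite opprK.
by rewrite e; apply/donIN/tdiff_donI.
Qed.

(* The image of the intramural map ^[]A_n -> H^tot(A_n): cycles homologous
   to a family of receptor cycles. *)
Definition intramural n (x : chain) : Prop :=
  exists w, prodRecK D n w /\ totB D n (csub x w).

(* A total cycle whose components all lie in im c + im d is intramural:
   subtracting the boundary of the vertical parts leaves horizontal
   boundaries, which the cycle condition forces into ker delta_1. *)
Lemma donI_intramural n x : totZ D n x -> prodDonI D n x -> intramural n x.
Proof.
move=> hz hx.
have [ab hab] := @choice_on (fun i r => (A i (r + 1) * A (i + 1) r)%type)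
  (fun _ _ => (0, 0)) _ (fun i r p =>
    x (i + 1) (r + 1) = dV i (r + 1) p.1 + dH (i + 1) r p.2)
  (fun i r h => let: ex_intro b (ex_intro a e) := hx i r h in ex_intro _ (b, a) e).
pose Y := shift2 (fun i r => sgn R (n - 1) *: (ab (i + 1) r).1).
exists (csub x (bnd (n - 1) Y)); split; last first.
  apply: totB_ext (totB_bnd n Y) _ => j s.
  by rewrite /csub /cadd /copp opprD opprK addrA subrr add0r.
move=> j s h.
have [i Ej] := ex_pred j; have [r Es] := ex_pred s; subst j s.
have [i0 Ei] := ex_pred i; have [r0 Er] := ex_pred r; subst i r.
set a := (ab (i0 + 1) (r0 + 1)).2; set b' := (ab (i0 + 1 + 1) r0).1.
have hw : csub x (bnd (n - 1) Y) (i0 + 1 + 1) (r0 + 1 + 1)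
          = dH (i0 + 1 + 1) (r0 + 1) a - sgn R (n - 1) *: dH (i0 + 1 + 1) (r0 + 1) b'.
  rewrite /csub /cadd /copp bndE /tdiff /Y !shift2E (hab _ _ h) !diffE sgnK.
  by rewrite (addrC (dV _ _ _)) (addrC (_ *: _)) addrKA.
have hc : dH (i0 + 1 + 1 + 1) (r0 + 1) (dV (i0 + 1 + 1) (r0 + 1) b')
          = - (sgn R n *: dH (i0 + 1 + 1 + 1) (r0 + 1) (dV (i0 + 1 + 1) (r0 + 1) a)).
  have hn : (i0 + 1 + 1 + 1) + (r0 + 1) = n by lia.
  have := cycleE hz hn; rewrite (hab _ _ hn) (hab _ _ h).
  by rewrite !diffE dhh dvv dvh addr0 add0r => ->.
rewrite /recK hw; split; first by rewrite !diffE !dhh scaler0 subrr.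
by rewrite !diffE !dvh hc sgn_pred scaleNr scalerN sgnK opprK subrr.
Qed.

Lemma recK_cycle n w : prodRecK D n w -> totZ D n w.
Proof.
move=> hw i r h; rewrite /tdiff.
have [h1 _] := hw (i + 1) r h.
have [_ h2] := hw i (r + 1) (ltac:(lia)).
by rewrite h1 h2 scaler0 addr0.
Qed.

Definition push_dv (u : chain) : chain :=
  shift2 (fun i r => dV i (r + 1) (u i (r + 1))).

Lemma push_dv_add x y i r : push_dv (cadd x y) i r = push_dv x i r + push_dv y i r.
Proof.
have [i0 ->] := ex_pred i; have [r0 ->] := ex_pred r.
by rewrite /push_dv !shift2E /cadd dVD.
Qed.

Lemma push_dv_scale a x i r : push_dv (cscale a x) i r = a *: push_dv x i r.
Proof.
have [i0 ->] := ex_pred i; have [r0 ->] := ex_pred r.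
by rewrite /push_dv !shift2E /cscale dVZ.
Qed.

(* delta_1 maps a compatible family of donors to a compatible family of
   receptors, each donor serving as its own witness of compatibility. *)
Lemma limK_push n u : limK D n u -> limRK D n (push_dv u).
Proof.
move=> [hd hl]; split.
  move=> i r h; have [i0 Ei] := ex_pred i; have [r0 Er] := ex_pred r; subst i r.
  rewrite /push_dv shift2E; split; last exact: dvv.
  by apply: hd; lia.
move=> i r h; exists (u (i + 1) (r + 1)); split.
- exact: hd.
- by rewrite /push_dv shift2E subrr; apply: recI0.
- by rewrite /push_dv shift2E -opprB; apply/recIN/hl; lia.
Qed.

Lemma totB_cokI n w : prodRecK D n w -> totB D n w -> cokI D n w.
Proof.
move=> hw [Y hY]; exists Y; split.
  move=> i r h; have [i0 Ei] := ex_pred i; subst i.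
  have [_ hv] := hw (i0 + 1) (r + 1) (ltac:(lia)).
  by rewrite (hY i0 r) /tdiff ?diffE ?dvv ?scaler0 ?addr0 ?dvh in hv; last lia.
by move=> i r h; rewrite hY // subrr; apply: recI0.
Qed.

Lemma cokI_totB n w : cokI D n w -> totB D n w.
Proof.
move=> [u [_ hr]].
have [z hz] := @choice_on A (fun _ _ => 0) (fun i r => (i + 1) + (r + 1) = n)
  (fun i r z => dH (i + 1) r (dV i r z) = w (i + 1) (r + 1) - tdiff (n - 1) u i r) hr.
exists (cadd u (shift2 (fun i r => dV i (r + 1) (z i (r + 1))))) => i r h.
have [i0 Ei] := ex_pred i; have [r0 Er] := ex_pred r; subst i r.
move/eqP: (hz (i0 + 1) (r0 + 1) h); rewrite eq_sym subr_eq => /eqP ->.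
rewrite /tdiff /cadd !shift2E !diffE dvv addr0 addrA; congr (_ + _).
exact: addrC.
Qed.

Lemma limit_kernel n :
  exists h, sq_iso (limK D n) (limI D n) (kerK D n) (kerI D n) h.
Proof.
exists (tw n); split.
- apply: sq_hom_pointwise; [exact: prodDonI_null|exact: tw_add|exact: tw_scale| |].
  + by move=> u hu; apply/limK_tw; rewrite twK.
  + by move=> u _ hu; apply/prodDonI_tw.
- by move=> u _ /prodDonI_tw.
- move=> v hv; exists (tw n v); split; first exact/limK_tw.
  by apply/prodDonI_null/csub_null => i r; rewrite twK.
Qed.

Section ExactColumns.
Hypothesis hcol : columns_exact D.

(* bar-delta_1 : (A_{i+1,r+1})_[] -> ^[]A_{i+2,r+1} is injective ... *)
Lemma dv_donor_inj i r (x : A (i + 1) (r + 1)) :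
  recI (i + 1) r (dV (i + 1) (r + 1) x) -> donI i r x.
Proof.
move=> [y hy].
have h0 : dV (i + 1) (r + 1) (x - dH (i + 1) r y) = 0 by rewrite !diffE dvh hy subrr.
have [z hz] := hcol h0.
by exists z, y; rewrite hz subrK.
Qed.

(* ... and surjective. *)
Lemma dv_donor_surj i r (w : A (i + 1 + 1) (r + 1)) : recK w ->
  exists x : A (i + 1) (r + 1), donK x /\ recI (i + 1) r (w - dV (i + 1) (r + 1) x).
Proof.
move=> [hh hv]; have [x hx] := hcol hv.
exists x; split; first by rewrite /donK hx.
by rewrite hx subrr; apply: recI0.
Qed.

(* One step of the peekaboo argument: if the two components of a total
   cycle around position (i + 1, r + 1) are in ker delta_1, the component
   at (i + 1, r) can be removed by a boundary supported at (i, r); the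
   component at (i, r + 1) stays in ker delta_1 and no other row moves. *)
Lemma kill_step n x i r : totZ D n x -> (i + 1) + r = n ->
  dV (i + 1) r (x (i + 1) r) = 0 -> dV i (r + 1) (x i (r + 1)) = 0 ->
  exists x', [/\ totZ D n x', totB D n (csub x' x), x' (i + 1) r = 0,
    dV i (r + 1) (x' i (r + 1)) = 0 &
    forall j s, j <> i -> j <> i + 1 -> x' j s = x j s].
Proof.
move=> hz h hv1 hv2.
have [c hc] := hcol hv1.
pose Y := single (sgn R (n - 1) *: c).
exists (csub x (bnd (n - 1) Y)); split.
- by apply: totZ_add => //; apply/totZ_opp/totZ_bnd.
- apply: (totB_ext (totB_opp (totB_bnd n Y))) => j s.
  by rewrite /csub /cadd /copp addrAC subrr add0r.
- have [r0 Er] := ex_pred r; subst r.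
  rewrite /csub /cadd /copp bndE /tdiff /Y single_neq; last by lia.
  by rewrite single_id dH0 add0r dVZ sgnK hc subrr.
- have [i0 Ei] := ex_pred i; subst i.
  rewrite /csub /cadd /copp bndE /tdiff /Y single_id single_neq; last by lia.
  rewrite !diffE scaler0 addr0 hv2 add0r dvh hc.
  by rewrite (cycleE hz h) hv2 scaler0 oppr0 scaler0 oppr0.
- move=> j s nj nj1.
  have [j0 Ej] := ex_pred j; have [s0 Es] := ex_pred s; subst j s.
  rewrite /csub /cadd /copp bndE /tdiff /Y !single_neq; try lia.
  by rewrite dH0 dV0 scaler0 addr0 oppr0 addr0.
Qed.

(* Iterating [kill_step] downwards from row M: a total cycle whose
   components up to row M are in ker delta_1 is homologous to one vanishing
   in the rows M - k < j <= M, still in ker delta_1 up to row M - k. *)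
Lemma kill_iter n M (k : nat) x : totZ D n x ->
  (forall j s, j + s = n -> j <= M -> dV j s (x j s) = 0) ->
  exists x', [/\ totZ D n x', totB D n (csub x' x),
     (forall j s, j + s = n -> M - k%:Z < j <= M -> x' j s = 0) &
     (forall j s, j + s = n -> j <= M - k%:Z -> dV j s (x' j s) = 0)].
Proof.
move=> hz hv; elim: k => [|k [x1 [hz1 hb1 h01 hv1]]].
  exists x; split => //.
  - by apply/totB_null/csub_null.
  - by move=> j s _ /andP[]; lia.
  - by move=> j s e hj; apply: hv => //; lia.
have [i Ei] : exists i, i = M - k%:Z - 1 by eexists.
have [r Er] : exists r, r = n - (M - k%:Z) by eexists.
have hir : (i + 1) + r = n by lia.
have [x2 [hz2 hb2 h02 hv2 heq]] := kill_step hz1 hir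
  (hv1 (i + 1) r hir (ltac:(lia))) (hv1 i (r + 1) (ltac:(lia)) (ltac:(lia))).
exists x2; split => //.
- exact: totB_trans hb2 hb1.
- move=> j s e /andP[hj1 hj2].
  have [ej|/eqP nej] := eqVneq j (i + 1).
    by subst j; have -> : s = r by lia.
  by rewrite heq; [apply: h01 => //; apply/andP; split|..]; lia.
- move=> j s e hj.
  have [ej|/eqP nej] := eqVneq j i.
    by subst j; have -> : s = r + 1 by lia.
  by rewrite heq; [apply: hv1|..]; lia.
Qed.

(* Intramural elements are peekaboo: given finitely many rows, all lying
   in [-M, M], kill the components of a family of receptor cycles in the
   rows (-M - 1, M]. *)
Lemma intramural_peekaboo n x : totZ D n x -> intramural n x -> peekaboo D n x.
Proof.
move=> hz [w [hw hb]]; split => // I.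
pose M := (\max_(j <- I) absz j)%N.
have [x' [hz' hb' h0 _]] := @kill_iter n M%:Z (2 * M + 1) w (recK_cycle hw)
  (fun j s e _ => proj2 (hw j s e)).
exists x'; split => //; first exact: totB_trans hb' (totB_sym hb).
move=> i r e hi; apply: h0 => //.
have := @leq_bigmax_seq _ I predT absz i hi isT; rewrite -/M => hM.
by apply/andP; split; lia.
Qed.

Lemma peekaboo_intramural n x : totZ D n x -> (peekaboo D n x <-> intramural n x).
Proof.
move=> hz; split; last exact: intramural_peekaboo.
by move/peekaboo_donI; apply: donI_intramural.
Qed.

Lemma donI_peekaboo n x : totZ D n x -> (prodDonI D n x <-> peekaboo D n x).
Proof.
move=> hz; split; last exact: peekaboo_donI.
by move/(donI_intramural hz)/(intramural_peekaboo hz).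
Qed.

(* A compatible family of receptors comes, through bar-delta_1, from a
   compatible family of donors: lift each receptor by [dv_donor_surj]; the
   lifts are compatible because bar-delta_1 is injective. *)
Lemma limRK_lift n w : limRK D n w ->
  exists u, limK D n u /\ prodRecI D (n + 1) (csub (push_dv u) w).
Proof.
move=> [hw hc].
have [xx hxx] := @choice_on (fun i r => A (i + 1) (r + 1)) (fun _ _ => 0)
  (fun i r => (i + 1 + 1) + (r + 1) = n + 1) (fun i r x =>
    donK x /\ recI (i + 1) r (w (i + 1 + 1) (r + 1) - dV (i + 1) (r + 1) x))
  (fun i r h => dv_donor_surj (hw _ _ h)).
exists (shift2 xx); split; last first.
  move=> i r h; have [i0 Ei] := ex_pred i; subst i.
  rewrite /csub /cadd /copp /push_dv !shift2E -opprB; apply: recIN.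
  by have [_ ] := hxx i0 r (ltac:(lia)).
split=> i r h; have [i0 Ei] := ex_pred i; have [r0 Er] := ex_pred r; subst i r.
  by rewrite shift2E; have [] := hxx i0 r0 (ltac:(lia)).
rewrite !shift2E.
have [_ hB] := hxx i0 (r0 + 1) (ltac:(lia)).
have [_ hA] := hxx (i0 + 1) r0 (ltac:(lia)).
have [v [_ hv1 hv2]] := hc (i0 + 1) r0 (ltac:(lia)).
have hd : donI (i0 + 1) r0 (v - xx (i0 + 1) r0).
  by apply: dv_donor_inj; rewrite dVB -(subrBB _ _ (w _ _)); apply: recIB hA hv1.
have := dH_donI hd; rewrite dHB => hdd.
rewrite -(subrBB _ _ (dH (i0 + 1 + 1) (r0 + 1) v)).
rewrite -(subrBB _ (dV _ _ (xx i0 (r0 + 1))) (w (i0 + 1 + 1) (r0 + 1 + 1))).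
by apply: recIB hdd; apply: recIB hB hv2.
Qed.

Lemma total_to_limit n : exists f : chain -> chain,
  [/\ sq_hom (totZ D n) (totB D n) (limK D n) (limI D n) f,
      sq_surj (totZ D n) (limK D n) (limI D n) f &
      forall x, totZ D n x -> (limI D n (f x) <-> peekaboo D n x)].
Proof.
exists (tw n); split.
- apply: sq_hom_pointwise; [exact: prodDonI_null|exact: tw_add|exact: tw_scale| |].
  + by move=> x /cycle_kerK /limK_tw.
  + by move=> x _ /totB_donI hx; apply/prodDonI_tw.
- by move=> u /limK_lift [x [hz hx]]; exists x.
- by move=> x hz; apply: iff_trans (prodDonI_tw n n x) (donI_peekaboo hz).
Qed.

Lemma limit_receptors n :
  exists g, sq_iso (limK D n) (limI D n) (limRK D n) (limRI D n) g.
Proof.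
exists push_dv; split.
- apply: sq_hom_pointwise;
    [exact: prodRecI_null|exact: push_dv_add|exact: push_dv_scale|exact: limK_push|].
  move=> u _ hu i r h; have [i0 Ei] := ex_pred i; subst i.
  by rewrite /push_dv shift2E; apply/dV_donI/hu; lia.
- move=> u _ hu i r h; apply: dv_donor_inj.
  by have := hu (i + 1) r (ltac:(lia)); rewrite /push_dv shift2E.
- by move=> w /limRK_lift [u [hu hw]]; exists u.
Qed.

Lemma cokernel_peekaboo n :
  exists k, sq_iso (cokK D n) (cokI D n) (peekaboo D n) (totB D n) k.
Proof.
exists id; split.
- apply: sq_hom_pointwise => //; first exact: totB_null.
  + move=> w hw; apply: intramural_peekaboo (recK_cycle hw) _ => //.
    by exists w; split; last exact/totB_null/csub_null.
  + by move=> w _; apply: cokI_totB.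
- by move=> w hw; apply: totB_cokI.
- move=> y hy; have [w [hw hb]] := (peekaboo_intramural hy.1).1 hy.
  by exists w; split; last exact: totB_sym.
Qed.

End ExactColumns.

End DoubleComplex.

Theorem corollary6p6 (R : pzRingType) (D : dcomplex R)
    (hcol : columns_exact D) (n : int) :
  (* bar-delta_1 : (A_{i,r})_[] -> ^[]A_{i+1,r} is an isomorphism *)
  ((forall i r (x : dobj D (i + 1) (r + 1)),
      donK x -> recI (i + 1) r (dv D (i + 1) (r + 1) x) -> donI i r x) /\
   (forall i r (w : dobj D (i + 1 + 1) (r + 1)), recK w ->
      exists x : dobj D (i + 1) (r + 1),
        donK x /\ recI (i + 1) r (w - dv D (i + 1) (r + 1) x))) /\
  (* 0 -> PB(H_n) -> H_n -> lim (A_{i,n-i})_[] -> 0 exact *)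
  (exists f : chain D -> chain D,
     [/\ sq_hom (totZ D n) (totB D n) (limK D n) (limI D n) f,
         sq_surj (totZ D n) (limK D n) (limI D n) f &
         forall x, totZ D n x -> (limI D n (f x) <-> peekaboo D n x)]) /\
  (* lim of donors  ~=  lim of receptors ^[]A_{i,n-i+1} *)
  (exists g, sq_iso (limK D n) (limI D n) (limRK D n) (limRI D n) g) /\
  (* lim of donors  ~=  ker (bar-delta : A_{n[]} -> ^[]A_{n+1}) *)
  (exists h, sq_iso (limK D n) (limI D n) (kerK D n) (kerI D n) h) /\
  (* PB(H_n) = image of the intramural map ^[]A_n -> H_n *)
  (forall x, totZ D n x ->
     (peekaboo D n x <-> exists w, prodRecK D n w /\ totB D n (csub x w))) /\
  (* coker (bar-delta : A_{n-1 []} -> ^[]A_n)  ~=  PB(H_n) *)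
  (exists k, sq_iso (cokK D n) (cokI D n) (peekaboo D n) (totB D n) k).
Proof.
split; first split.
- by move=> i r x _; apply: dv_donor_inj.
- by move=> i r w; apply: dv_donor_surj.
split; first exact: total_to_limit.
split; first exact: limit_receptors.
split; first exact: limit_kernel.
split; first by move=> x hz; apply: peekaboo_intramural.
exact: cokernel_peekaboo.
Qed.
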